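(* Suppose that $$g[\![\rho]\!]p_1^2+\int_{p_1}^0\Big(\Gamma_{\mathrm{rel}}(p)^3+p^2\Gamma_{\mathrm{rel}}(p)\Big)dp<0 .$$ Then $\inf_{\lambda>0}\nu(\lambda)<-1$.
   Context: Constants $g>0$, $p_0<p_1<0$, $[\![\rho]\!]<0$ (density jump air minus water); $\Gamma_{\mathrm{rel}}:[p_1,0]\to(0,\infty)$ a given continuous function (prescribed relative circulation). For $\lambda>0$ let $a(p)=\Gamma_{\mathrm{rel}}(p)$ for $p_1<p<0$, $a(p)=\lambda$ for $p_0<p<p_1$; $\mathscr A=\{\varphi\in H^1((p_0,0)):\varphi(p_0)=\varphi(0)=0\}$; $\mathscr R(\varphi;\lambda)=\dfrac{g[\![\rho]\!]\varphi(p_1)^2+\int_{p_0}^0a^3\varphi_p^2\,dp}{\int_{p_0}^0a\varphi^2\,dp}$; $\nu(\lambda)=\inf_{\varphi\in\mathscr A,\varphi\not\equiv0}\mathscr R(\varphi;\lambda)$. *)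

From HB Require Import structures.
From mathcomp Require Import all_boot all_order all_algebra.
From mathcomp Require Import all_classical all_reals all_analysis.
Set Implicit Arguments. Unset Strict Implicit. Unset Printing Implicit Defensive.
Import Order.TTheory GRing.Theory Num.Theory.
Import numFieldNormedType.Exports.
Local Open Scope classical_set_scope.
Local Open Scope ring_scope.

Section Defs.
Variable R : realType.
Local Notation mu := (@lebesgue_measure R).

(* a(p) = Gamma_rel(p) for p1 < p, and = lambda for p <= p1
   (the value at the single point p1 is irrelevant: null set). *)
Definition acoef (p1 lam : R) (Gam : R -> R) (p : R) : R :=
  if p1 < p then Gam p else lam.

(* (phi, phip) represents an element phi of
   A = { phi in H^1((p0,0)) : phi(p0) = phi(0) = 0 }
   via its (absolutely) continuous representative: phip is in L^2((p0,0))
   (measurable, integrable, square integrable), phi is its primitive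
   starting from phi(p0) = 0 on [p0,0], and phi(0) = 0.  phip is then the
   weak derivative phi_p. *)
Definition inA (p0 : R) (phi phip : R -> R) : Prop :=
  [/\ measurable_fun `[p0, 0] phip,
      mu.-integrable `[p0, 0] (EFin \o phip),
      (\int[mu]_(x in `[p0, 0%R]) ((phip x) ^+ 2)%:E < +oo)%E,
      (forall x, p0 <= x <= 0 -> phi x = Rintegral mu `[p0, x] phip)
    & phi 0 = 0].

(* Rayleigh quotient R(phi; lambda); rho = [[rho]] the density jump. *)
Definition rayleigh (g rho p0 p1 lam : R) (Gam : R -> R)
    (phi phip : R -> R) : R :=
  (g * rho * (phi p1) ^+ 2
     + Rintegral mu `]p0, 0[ (fun p => (acoef p1 lam Gam p) ^+ 3 * (phip p) ^+ 2))
  / Rintegral mu `]p0, 0[ (fun p => acoef p1 lam Gam p * (phi p) ^+ 2).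

Definition nu (g rho p0 p1 : R) (Gam : R -> R) (lam : R) : \bar R :=
  ereal_inf [set r : \bar R | exists phi phip : R -> R,
               [/\ inA p0 phi phip,
                   (exists x, p0 <= x <= 0 /\ phi x != 0)
                 & r = (rayleigh g rho p0 p1 lam Gam phi phip)%:E]].
End Defs.

From HB Require Import structures.
From mathcomp Require Import all_boot all_order all_algebra.
From mathcomp Require Import all_classical all_reals all_analysis.
From mathcomp Require Import measurable_realfun ring lra.
Import Order.TTheory GRing.Theory Num.Theory.
Import numFieldNormedType.Exports.
Local Open Scope classical_set_scope.
Local Open Scope ring_scope.

(* Test the Rayleigh quotient with the function phi equal to p on [p1, 0] and
   to the linear interpolation c (p - p0), c = p1 / (p1 - p0), on [p0, p1].
   For this phi the contributions of [p0, p1] are lam^3 c^2 (p1 - p0) to the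
   numerator and lam * M, M > 0, to the denominator, whereas [p1, 0] gives
   exactly g[[rho]] p1^2 + int Gam^3 and int p^2 Gam.  The quotient is below
   -1 iff g[[rho]] p1^2 + int (Gam^3 + p^2 Gam) + lam^3 c^2 (p1 - p0) + lam M
   is negative, which holds for lam small enough by the hypothesis. *)

Section interval_integrals.
Context {R : realType}.
Local Notation mu := (@lebesgue_measure R).
Implicit Types (a b c : itv_bound R) (f : R -> R).

Lemma integrable_setU (A B : set R) (f : R -> \bar R) :
  measurable A -> measurable B -> [disjoint A & B] ->
  mu.-integrable A f -> mu.-integrable B f -> mu.-integrable (A `|` B) f.
Proof.
move=> mA mB AB iA iB.
have mAB : measurable_fun (A `|` B) f.
  by apply/(measurable_funU f mA mB); split; exact: (measurable_int mu).
apply/integrableP; split => //.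
rewrite integral_setU //; last exact: measurableT_comp.
case/integrableP: iA => _ iA; case/integrableP: iB => _ iB.
exact: lte_add_pinfty.
Qed.

Lemma disjoint_itv_split a b c :
  [disjoint [set` Interval a c] & [set` Interval c b]].
Proof.
apply/eqP/seteqP; split => // x [/=]; rewrite !itv_boundlr => /andP[_ xc] /andP[cx _].
by move: (le_trans xc cx); rewrite bnd_simp ltxx.
Qed.

Lemma integrable_itv_split a b c f : (a <= c)%O -> (c <= b)%O ->
  mu.-integrable [set` Interval a c] (EFin \o f) ->
  mu.-integrable [set` Interval c b] (EFin \o f) ->
  mu.-integrable [set` Interval a b] (EFin \o f).
Proof.
move=> ac cb iac icb; rewrite (itv_bndbnd_setU ac cb).
by apply: integrable_setU => //; exact: disjoint_itv_split.
Qed.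

Lemma Rintegral_itv_split a b c f : (a <= c)%O -> (c <= b)%O ->
  mu.-integrable [set` Interval a c] (EFin \o f) ->
  mu.-integrable [set` Interval c b] (EFin \o f) ->
  \int[mu]_(x in [set` Interval a b]) f x =
  \int[mu]_(x in [set` Interval a c]) f x + \int[mu]_(x in [set` Interval c b]) f x.
Proof.
move=> ac cb iac icb; rewrite (itv_bndbnd_setU ac cb) Rintegral_setU //.
  by apply: integrable_setU => //; exact: disjoint_itv_split.
exact: disjoint_itv_split.
Qed.

Lemma integrable_itvcc_continuous (a b : R) f :
  {within `[a, b], continuous f} -> mu.-integrable `[a, b] (EFin \o f).
Proof.
by move=> cf; apply: continuous_compact_integrable => //; exact: segment_compact.
Qed.

Lemma eq_integrable_EFin {D : set R} {f g} : measurable D -> {in D, f =1 g} ->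
  mu.-integrable D (EFin \o f) -> mu.-integrable D (EFin \o g).
Proof. by move=> mD fg; apply: eq_integrable => // x xD /=; rewrite fg. Qed.

Lemma integrable_itv_eq_cst {l r : bool} {a b k : R} {f} :
  {in [set` Interval (BSide l a) (BSide r b)], f =1 cst k} ->
  mu.-integrable [set` Interval (BSide l a) (BSide r b)] (EFin \o f).
Proof.
move=> fk; apply: (eq_integrable_EFin (f := cst k)) => //.
  by move=> x /fk.
have icst : mu.-integrable `[a, b] (EFin \o cst k).
  by apply: integrable_itvcc_continuous; apply: continuous_subspaceT => x; exact: cvg_cst.
apply: integrableS icst => //; apply: subset_itv.
- by case: (l); rewrite bnd_simp.
- by case: (r); rewrite bnd_simp.
Qed.

Lemma fine_lebesgue_measure_itv (l r : bool) (a b : R) : a <= b ->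
  fine (mu [set` Interval (BSide l a) (BSide r b)]) = b - a.
Proof.
rewrite lebesgue_measure_itv /= le_eqVlt => /predU1P[->|ab].
  by rewrite ltxx subrr.
by rewrite lte_fin ab.
Qed.

Lemma Rintegral_itv_eq_cst {l r : bool} {a b k : R} {f} : a <= b ->
  {in [set` Interval (BSide l a) (BSide r b)], f =1 cst k} ->
  \int[mu]_(x in [set` Interval (BSide l a) (BSide r b)]) f x = k * (b - a).
Proof.
move=> ab fk; rewrite (eq_Rintegral _ (g := cst k)); last by move=> x /fk.
by rewrite Rintegral_cst // fine_lebesgue_measure_itv.
Qed.

Lemma Rintegral_itvoo_cc (a b : R) f : mu.-integrable `[a, b] (EFin \o f) ->
  \int[mu]_(x in `]a, b[) f x = \int[mu]_(x in `[a, b]) f x.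
Proof.
move=> iab; rewrite Rintegral_itv_obnd_cbnd ?Rintegral_itv_bndo_bndc //.
  by apply: integrableS iab => //; apply: subset_itv; rewrite bnd_simp.
by apply: integrableS iab => //; apply: subset_itv; rewrite bnd_simp.
Qed.

Lemma Rintegral_itvoc_gt0 (a m b r : R) f : a <= m -> m < b -> 0 < r ->
  mu.-integrable `]a, b] (EFin \o f) ->
  (forall x, a < x <= b -> 0 <= f x) -> (forall x, m < x <= b -> r <= f x) ->
  0 < \int[mu]_(x in `]a, b]) f x.
Proof.
move=> am mb r0 iab f0 fr.
have sub_ab (c d : itv_bound R) : (BRight a <= c)%O -> (d <= BRight b)%O ->
    mu.-integrable [set` Interval c d] (EFin \o f).
  by move=> ac db; apply: integrableS iab => //; exact: subset_itv.
rewrite (@Rintegral_itv_split _ _ (BRight m)) ?bnd_simp ?(ltW mb) //;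
  try by apply: sub_ab; rewrite bnd_simp ?(ltW mb).
have left_ge0 : 0 <= \int[mu]_(x in `]a, m]) f x.
  apply: Rintegral_ge0 => x; rewrite /= in_itv /= => /andP[ax xm].
  by apply: f0; rewrite ax (le_trans xm (ltW mb)).
have right_ge : r * (b - m) <= \int[mu]_(x in `]m, b]) f x.
  rewrite -(@Rintegral_itv_eq_cst false false m b r (cst r)) ?(ltW mb) //.
  apply: le_Rintegral => //.
  - exact: integrable_itv_eq_cst.
  by apply: sub_ab; rewrite bnd_simp.
apply: lt_le_trans (lerD left_ge0 right_ge).
by rewrite add0r mulr_gt0 // subr_gt0.
Qed.

End interval_integrals.

Lemma exists_small_cubic_linear {R : realFieldType} {e A B : R} :
  0 < e -> 0 <= A -> 0 <= B -> exists2 t : R, 0 < t & t ^+ 3 * A + t * B < e.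
Proof.
move=> e0 A0 B0; set t := Num.min 1 (e / (2 * (A + B + 1))).
have ABpos : 0 < A + B + 1 by lra.
have t0 : 0 < t by rewrite lt_min ltr01 divr_gt0 // mulr_gt0.
have t1 : t <= 1 by rewrite ge_min lexx.
have te : t * (A + B + 1) <= e / 2.
  have : t <= e / (2 * (A + B + 1)) by rewrite ge_min lexx orbT.
  move/(ler_wpM2r (ltW ABpos)).
  suff -> : e / (2 * (A + B + 1)) * (A + B + 1) = e / 2 by [].
  by field; rewrite gt_eqF.
have t3 : t ^+ 3 * A <= t * A.
  rewrite ler_wpM2r // exprS ler_piMr ?(ltW t0) //.
  exact: exprn_ile1 (ltW t0) t1.
exists t => //; nra.
Qed.

Section test_function.
Context {R : realType}.
Local Notation mu := (@lebesgue_measure R).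
Variables p0 p1 : R.
Hypotheses (p01 : p0 < p1) (p1_lt0 : p1 < 0).

Definition test_slope : R := p1 / (p1 - p0).
Definition test_fun (x : R) : R := if p1 < x then x else test_slope * (x - p0).
Definition test_deriv (x : R) : R := if p1 < x then 1 else test_slope.
Definition test_mass : R :=
  \int[mu]_(x in `]p0, p1]) (test_slope * (x - p0)) ^+ 2.

Lemma test_slopeK : test_slope * (p1 - p0) = p1.
Proof. by rewrite /test_slope divfK // subr_eq0 gt_eqF. Qed.

Lemma test_fun_p1 : test_fun p1 = p1.
Proof. by rewrite /test_fun ltxx test_slopeK. Qed.

Lemma integrable_test_deriv_pow n :
  mu.-integrable `[p0, 0] (EFin \o fun x => test_deriv x ^+ n).
Proof.
apply: (@integrable_itv_split _ _ _ (BRight p1));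
  rewrite ?bnd_simp ?(ltW p01) ?(ltW p1_lt0) //.
- apply: (integrable_itv_eq_cst (k := test_slope ^+ n)) => x.
  by rewrite inE /= in_itv /= => /andP[_ xp1]; rewrite /test_deriv ltNge xp1.
- apply: (integrable_itv_eq_cst (k := 1 ^+ n)) => x.
  by rewrite inE /= in_itv /= => /andP[p1x _]; rewrite /test_deriv p1x.
Qed.

Lemma test_fun_primitive x : p0 <= x <= 0 ->
  test_fun x = \int[mu]_(y in `[p0, x]) test_deriv y.
Proof.
move=> /andP[p0x x0]; have [xp1|p1x] := leP x p1.
  rewrite /test_fun ltNge xp1 (Rintegral_itv_eq_cst (k := test_slope)) //.
  move=> y; rewrite inE /= in_itv /= => /andP[_ yx].
  by rewrite /test_deriv ltNge (le_trans yx xp1).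
have ider : mu.-integrable `[p0, 0] (EFin \o test_deriv) :=
  integrable_test_deriv_pow 1.
rewrite (@Rintegral_itv_split _ _ _ (BRight p1))
  ?bnd_simp ?(ltW p01) ?(ltW p1x) //; first last.
- by apply: integrableS ider => //; apply: subset_itv; rewrite bnd_simp ?(ltW p01).
- by apply: integrableS ider => //; apply: subset_itv; rewrite bnd_simp ?(ltW p1_lt0).
rewrite (Rintegral_itv_eq_cst (k := test_slope)) ?(ltW p01) //; last first.
  by move=> y; rewrite inE /= in_itv /= => /andP[_ yp1]; rewrite /test_deriv ltNge yp1.
rewrite (Rintegral_itv_eq_cst (k := 1)) ?(ltW p1x) //.
  by rewrite /test_fun p1x test_slopeK mul1r addrC subrK.
by move=> y; rewrite inE /= in_itv /= => /andP[p1y _]; rewrite /test_deriv p1y.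
Qed.

Lemma inA_test_fun : inA p0 test_fun test_deriv.
Proof.
have ider : mu.-integrable `[p0, 0] (EFin \o test_deriv) :=
  integrable_test_deriv_pow 1.
split => //.
- by apply/measurable_EFinP; exact: (measurable_int _ ider).
- by rewrite ltey_eq (integrable_fin_num _ (integrable_test_deriv_pow 2)).
- exact: test_fun_primitive.
- by rewrite /test_fun p1_lt0.
Qed.

Lemma integrable_test_square :
  mu.-integrable `]p0, p1] (EFin \o fun x => (test_slope * (x - p0)) ^+ 2).
Proof.
have cont : continuous (fun x : R => (test_slope * (x - p0)) ^+ 2).
  move=> x; have affine : {for x, continuous (fun y : R => test_slope * (y - p0))}.
    apply: (@continuousM _ _ (fun=> test_slope) (fun y => y - p0)); first exact: cvg_cst.
    by apply: (@continuousB _ _ _ id (fun=> p0)); [exact: cvg_id | exact: cvg_cst].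
  exact: continuous_comp affine (@exprn_continuous R 2 _).
have := @integrable_itvcc_continuous _ p0 p1 _ (continuous_subspaceT cont).
by apply: integrableS => //; apply: subset_itv; rewrite bnd_simp.
Qed.

Lemma test_mass_gt0 : 0 < test_mass.
Proof.
have slope_lt0 : test_slope < 0 by rewrite /test_slope pmulr_llt0 ?invr_gt0 ?subr_gt0.
have mid_ge : p0 <= (p0 + p1) / 2 by have := p01; lra.
have mid_lt : (p0 + p1) / 2 < p1 by have := p01; lra.
apply: (@Rintegral_itvoc_gt0 _ p0 ((p0 + p1) / 2) p1 ((p1 / 2) ^+ 2) _ mid_ge mid_lt).
- have half_lt0 : p1 / 2 < 0 by have := p1_lt0; lra.
  by rewrite expr2 nmulr_rgt0.
- exact: integrable_test_square.
- by move=> x _; exact: sqr_ge0.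
move=> x /andP[mx _].
have : test_slope * (x - p0) <= p1 / 2.
  rewrite -test_slopeK -mulrA ler_nM2l //.
  by move: mx; have := p01; lra.
set u := test_slope * (x - p0); move=> up1.
rewrite -subr_ge0 subr_sqr mulr_le0 //; have := p1_lt0; lra.
Qed.

Variables (lam : R) (Gam : R -> R).

Lemma test_dirichlet_integral :
  mu.-integrable `[p1, 0] (EFin \o fun p => Gam p ^+ 3) ->
  \int[mu]_(p in `]p0, 0[) (acoef p1 lam Gam p ^+ 3 * test_deriv p ^+ 2) =
  lam ^+ 3 * (test_slope ^+ 2 * (p1 - p0)) + \int[mu]_(p in `[p1, 0]) Gam p ^+ 3.
Proof.
move=> iG3.
have on_left : {in `]p0, p1]%classic,
    (fun p => acoef p1 lam Gam p ^+ 3 * test_deriv p ^+ 2)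
    =1 cst (lam ^+ 3 * test_slope ^+ 2)}.
  move=> p; rewrite inE /= in_itv /= => /andP[_ pp1].
  by rewrite /acoef /test_deriv ltNge pp1.
have on_right : {in `]p1, 0[%classic,
    (fun p => acoef p1 lam Gam p ^+ 3 * test_deriv p ^+ 2) =1 (fun p => Gam p ^+ 3)}.
  move=> p; rewrite inE /= in_itv /= => /andP[p1p _].
  by rewrite /acoef /test_deriv p1p expr1n mulr1.
have iG3r : mu.-integrable `]p1, 0[ (EFin \o fun p => Gam p ^+ 3).
  by apply: integrableS iG3 => //; apply: subset_itv; rewrite bnd_simp.
rewrite (@Rintegral_itv_split _ _ _ (BRight p1)) ?bnd_simp ?(ltW p01) //.
- rewrite (Rintegral_itv_eq_cst (ltW p01) on_left).
  rewrite (eq_Rintegral mu on_right).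
  by rewrite Rintegral_itvoo_cc // mulrA.
- exact: integrable_itv_eq_cst on_left.
- by apply: (eq_integrable_EFin _ _ iG3r) => // p /on_right ->.
Qed.

Lemma test_weighted_mass :
  mu.-integrable `[p1, 0] (EFin \o fun p => p ^+ 2 * Gam p) ->
  \int[mu]_(p in `]p0, 0[) (acoef p1 lam Gam p * test_fun p ^+ 2) =
  lam * test_mass + \int[mu]_(p in `[p1, 0]) (p ^+ 2 * Gam p).
Proof.
move=> iG1.
have on_left : {in `]p0, p1]%classic,
    (fun p => acoef p1 lam Gam p * test_fun p ^+ 2)
    =1 (fun p => lam * (test_slope * (p - p0)) ^+ 2)}.
  move=> p; rewrite inE /= in_itv /= => /andP[_ pp1].
  by rewrite /acoef /test_fun ltNge pp1.
have on_right : {in `]p1, 0[%classic,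
    (fun p => acoef p1 lam Gam p * test_fun p ^+ 2) =1 (fun p => p ^+ 2 * Gam p)}.
  move=> p; rewrite inE /= in_itv /= => /andP[p1p _].
  by rewrite /acoef /test_fun p1p mulrC.
have iG1r : mu.-integrable `]p1, 0[ (EFin \o fun p => p ^+ 2 * Gam p).
  by apply: integrableS iG1 => //; apply: subset_itv; rewrite bnd_simp.
rewrite (@Rintegral_itv_split _ _ _ (BRight p1)) ?bnd_simp ?(ltW p01) //.
- rewrite (eq_Rintegral mu on_left) (eq_Rintegral mu on_right).
  by rewrite Rintegral_itvoo_cc // RintegralZl //; exact: integrable_test_square.
- have ilam : mu.-integrable `]p0, p1]
      (EFin \o fun p => lam * (test_slope * (p - p0)) ^+ 2).
    exact: (eq_integrable _ _ _ _ (integrableZl _ lam integrable_test_square)).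
  by apply: (eq_integrable_EFin _ _ ilam) => // p /on_left ->.
- by apply: (eq_integrable_EFin _ _ iG1r) => // p /on_right ->.
Qed.

Lemma rayleigh_test_fun (g rho : R) :
  mu.-integrable `[p1, 0] (EFin \o fun p => Gam p ^+ 3) ->
  mu.-integrable `[p1, 0] (EFin \o fun p => p ^+ 2 * Gam p) ->
  rayleigh g rho p0 p1 lam Gam test_fun test_deriv =
  (g * rho * p1 ^+ 2 + (lam ^+ 3 * (test_slope ^+ 2 * (p1 - p0))
                        + \int[mu]_(p in `[p1, 0]) Gam p ^+ 3))
  / (lam * test_mass + \int[mu]_(p in `[p1, 0]) (p ^+ 2 * Gam p)).
Proof.
move=> iG3 iG1.
by rewrite /rayleigh test_fun_p1 test_dirichlet_integral // test_weighted_mass.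
Qed.

End test_function.

Lemma nu_le_rayleigh (R : realType) (g rho p0 p1 lam : R) (Gam phi phip : R -> R) :
  inA p0 phi phip -> (exists x, p0 <= x <= 0 /\ phi x != 0) ->
  (nu g rho p0 p1 Gam lam <= (rayleigh g rho p0 p1 lam Gam phi phip)%:E)%E.
Proof. by move=> phiA phi_neq0; apply: ereal_inf_lbound; exists phi, phip. Qed.

Theorem lemma4p6 (R : realType) (g p0 p1 rho : R) (Gam : R -> R) :
  0 < g -> p0 < p1 -> p1 < 0 -> rho < 0 ->
  {within `[p1, 0], continuous Gam} ->
  (forall p, p1 <= p <= 0 -> 0 < Gam p) ->
  g * rho * p1 ^+ 2
    + Rintegral (@lebesgue_measure R) `[p1, 0]
        (fun p => Gam p ^+ 3 + p ^+ 2 * Gam p) < 0 ->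
  (ereal_inf [set nu g rho p0 p1 Gam lam | lam in `]0%R, +oo[%classic] < (-1)%:E)%E.
Proof.
move=> _ p01 p1_lt0 _ cGam Gam_gt0 hyp.
have iG3 : (@lebesgue_measure R).-integrable `[p1, 0] (EFin \o fun p => Gam p ^+ 3).
  apply: integrable_itvcc_continuous => x.
  exact: continuous_comp (cGam x) (@exprn_continuous R 3 _).
have iG1 : (@lebesgue_measure R).-integrable `[p1, 0] (EFin \o fun p => p ^+ 2 * Gam p).
  have csq : {within `[p1, 0], continuous (fun p : R => p ^+ 2)}.
    by apply: continuous_subspaceT => y; exact: exprn_continuous.
  by apply: integrable_itvcc_continuous => x; exact: continuousM (csq x) (cGam x).
rewrite RintegralD // in hyp.
set G3 := \int[@lebesgue_measure R]_(p in `[p1, 0]) Gam p ^+ 3 in hyp *.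
set G1 := \int[@lebesgue_measure R]_(p in `[p1, 0]) (p ^+ 2 * Gam p) in hyp *.
have G1_ge0 : 0 <= G1.
  apply: Rintegral_ge0 => p; rewrite /= in_itv /= => p_in.
  by rewrite mulr_ge0 ?sqr_ge0 ?ltW ?Gam_gt0.
have gap : 0 < - (g * rho * p1 ^+ 2 + (G3 + G1)) by rewrite oppr_gt0.
have A_ge0 : 0 <= test_slope p0 p1 ^+ 2 * (p1 - p0).
  by rewrite mulr_ge0 ?sqr_ge0 // subr_ge0 ltW.
have [lam lam_gt0 small] := exists_small_cubic_linear gap A_ge0
  (ltW (test_mass_gt0 _ _ p01 p1_lt0)).
pose phi := test_fun p0 p1; pose phip := test_deriv p0 p1.
apply: (@le_lt_trans _ _ (rayleigh g rho p0 p1 lam Gam phi phip)%:E).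
  apply: ge_ereal_inf; exists (nu g rho p0 p1 Gam lam).
    by exists lam => //=; rewrite in_itv /= lam_gt0.
  apply: nu_le_rayleigh; first exact: inA_test_fun.
  by exists p1; rewrite /phi test_fun_p1 ?lt_eqF ?ltW.
have den_gt0 : 0 < lam * test_mass p0 p1 + G1.
  by rewrite ltr_pwDl // mulr_gt0 // test_mass_gt0.
rewrite lte_fin rayleigh_test_fun // ltr_pdivrMr //.
rewrite -/G3 -/G1; lra.
Qed.
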